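(* Let $\alpha\in\mathbb C$ and define sequences $u(k),v(k),f(k),g(k)$, $k\ge0$, by $u(0)=v(0)=0$, $f(0)=g(0)=1$ (so $u(1)=v(1)=1$) and, for $k\ge1$, $$u(k)=u(k-1)+f(k-1),\quad v(k)=v(k-1)+g(k-1),\quad f(k)=\frac{u(k)}{v(k)}\,g(k-1),\quad g(k)=\frac{\alpha v(k)}{k-\frac{\alpha u(k)}{f(k-1)}-\frac{\alpha v(k)}{g(k-1)}}.$$ (These are the recurrences equivalent to the constraints $\alpha u(k)=k\frac{f(k)g(k)f(k-1)}{f(k)g(k)+g(k)f(k-1)+f(k-1)g(k-1)}$, $\alpha v(k)=k\frac{g(k)f(k-1)g(k-1)}{f(k)g(k)+g(k)f(k-1)+f(k-1)g(k-1)}$ with $f(k)=u(k+1)-u(k)$, $g(k)=v(k+1)-v(k)$.) Then, for all $k$ such that the arguments are nonnegative integers, $$u(3k)=\frac{2k}{k+2\alpha}\Pi_1(k),\quad u(3k+1)=\frac{2k+2\alpha}{k+2\alpha}\Pi_1(k),\quad u(3k+2)=2\Pi_1(k),\quad f(3k-1)=f(3k)=f(3k+1)=\frac{2\alpha}{k+2\alpha}\Pi_1(k),$$ $$v(3k-1)=\frac{k-\alpha}{k+\alpha}\Pi_2(k),\quad v(3k)=\frac{k}{k+\alpha}\Pi_2(k),\quad v(3k+1)=\Pi_2(k),\quad g(3k-2)=g(3k-1)=g(3k)=\frac{\alpha}{k+\alpha}\Pi_2(k),$$ where $$\Pi_1(k)=\prod_{j=1}^k\frac{j+2\alpha}{j-\alpha},\qquad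 \Pi_2(k)=\prod_{j=1}^k\frac{j+\alpha}{j-2\alpha}.$$
   Context: Empty products equal $1$. The parameter $\alpha$ is such that all denominators occurring are nonzero. *)

From HB Require Import structures.
From mathcomp Require Import all_boot all_order all_algebra.
From mathcomp Require Import complex reals.
Set Implicit Arguments. Unset Strict Implicit. Unset Printing Implicit Defensive.
Import Order.TTheory GRing.Theory Num.Theory.
Local Open Scope ring_scope.
Local Open Scope complex_scope.

Fixpoint seqs (R : realType) (a : R[i]) (k : nat) : R[i] * R[i] * R[i] * R[i] :=
  match k with
  | 0 => (0, 0, 1, 1)
  | k'.+1 =>
      let '(u, v, f, g) := seqs a k' in
      let u' := u + f in
      let v' := v + g in
      (u', v', u' / v' * g, a * v' / (k'.+1%:R - a * u' / f - a * v' / g))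
  end.

Definition useq (R : realType) (a : R[i]) k : R[i] := (seqs a k).1.1.1.
Definition vseq (R : realType) (a : R[i]) k : R[i] := (seqs a k).1.1.2.
Definition fseq (R : realType) (a : R[i]) k : R[i] := (seqs a k).1.2.
Definition gseq (R : realType) (a : R[i]) k : R[i] := (seqs a k).2.

Definition Pi1 (R : realType) (a : R[i]) (k : nat) : R[i] :=
  \prod_(1 <= j < k.+1) ((j%:R + 2 * a) / (j%:R - a)).
Definition Pi2 (R : realType) (a : R[i]) (k : nat) : R[i] :=
  \prod_(1 <= j < k.+1) ((j%:R + a) / (j%:R - 2 * a)).

From HB Require Import structures.
From mathcomp Require Import all_boot all_order all_algebra.
From mathcomp Require Import complex reals.
From mathcomp Require Import ring.
Import Order.TTheory GRing.Theory Num.Theory.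
Local Open Scope ring_scope.

(* Induction on k with period three: if the closed forms hold at index 3k,
   three steps of the recurrence reproduce them at 3k+1, 3k+2 and 3k+3.
   Each step is a rational identity in k, a, Pi1(k) and Pi2(k), because the
   denominator of the g-recurrence collapses at these steps to k+1-2a, k+1-a
   and k+1 respectively; these are exactly the factors entering
   Pi2(k+1) = Pi2(k) (k+1+a)/(k+1-2a) and Pi1(k+1) = Pi1(k) (k+1+2a)/(k+1-a). *)

Section Recurrence.
Variables (R : realType) (a : R[i]).

Lemma seqs_step d {n u v f g u' v' f' g'} :
  seqs a n = (u, v, f, g) ->
  u + f = u' -> v + g = v' -> u' / v' * g = f' ->
  n.+1%:R - a * u' / f - a * v' / g = d -> a * v' / d = g' ->
  seqs a n.+1 = (u', v', f', g').
Proof. by move=> /= -> -> -> -> <- ->. Qed.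

Lemma Pi1S k : Pi1 a k.+1 = Pi1 a k * ((k.+1%:R + 2 * a) / (k.+1%:R - a)).
Proof. by rewrite /Pi1 big_nat_recr. Qed.

Lemma Pi2S k : Pi2 a k.+1 = Pi2 a k * ((k.+1%:R + a) / (k.+1%:R - 2 * a)).
Proof. by rewrite /Pi2 big_nat_recr. Qed.

Definition state_3k k :=
  (2 * k%:R / (k%:R + 2 * a) * Pi1 a k, k%:R / (k%:R + a) * Pi2 a k,
   2 * a / (k%:R + 2 * a) * Pi1 a k, a / (k%:R + a) * Pi2 a k).

Definition state_3k1 k :=
  ((2 * k%:R + 2 * a) / (k%:R + 2 * a) * Pi1 a k, Pi2 a k,
   2 * a / (k%:R + 2 * a) * Pi1 a k, a / (k.+1%:R + a) * Pi2 a k.+1).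

Definition state_3k2 k :=
  (2 * Pi1 a k, (k.+1%:R - a) / (k.+1%:R + a) * Pi2 a k.+1,
   2 * a / (k.+1%:R + 2 * a) * Pi1 a k.+1, a / (k.+1%:R + a) * Pi2 a k.+1).

Hypothesis a_neq0 : a != 0.
Hypothesis hden : forall n : nat,
  [/\ n%:R + a != 0, n%:R + 2 * a != 0, n%:R - a != 0 & n%:R - 2 * a != 0].

Lemma Pi1_neq0 k : Pi1 a k != 0.
Proof.
elim: k => [|k IH]; first by rewrite /Pi1 big_geq ?oner_eq0.
have [_ h1 h2 _] := hden k.+1.
by rewrite Pi1S !mulf_neq0 ?invr_neq0.
Qed.

Lemma Pi2_neq0 k : Pi2 a k != 0.
Proof.
elim: k => [|k IH]; first by rewrite /Pi2 big_geq ?oner_eq0.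
have [h1 _ _ h2] := hden k.+1.
by rewrite Pi2S !mulf_neq0 ?invr_neq0.
Qed.

(* [field] normalizes [k.+1%:R] to [1 + k%:R] in its side conditions. *)
Lemma succ_denoms_neq0 k :
  [/\ 1 + k%:R != 0 :> R[i], 1 + k%:R + a != 0, 1 + k%:R + 2 * a != 0,
      1 + k%:R - a != 0 & 1 + k%:R - 2 * a != 0].
Proof. by rewrite nat1r pnatr_eq0; have [] := hden k.+1. Qed.

Ltac field_at k :=
  rewrite ?Pi1S ?Pi2S;
  move: (hden k) (succ_denoms_neq0 k) (Pi1_neq0 k) (Pi2_neq0 k);
  move=> -[? ? _ _] [? ? ? ? ?] ? ?;
  field; by repeat (apply/andP; split).

Lemma seqs_3k1 k : seqs a (3 * k) = state_3k k -> seqs a (3 * k).+1 = state_3k1 k.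
Proof. by move=> E; apply: (seqs_step (k.+1%:R - 2 * a) E); field_at k. Qed.

Lemma seqs_3k2 k :
  seqs a (3 * k).+1 = state_3k1 k -> seqs a (3 * k).+2 = state_3k2 k.
Proof. by move=> E; apply: (seqs_step (k.+1%:R - a) E); field_at k. Qed.

Lemma seqs_3kS k : seqs a (3 * k).+2 = state_3k2 k -> seqs a (3 * k.+1) = state_3k k.+1.
Proof.
rewrite mulnSr addn3 => E.
by apply: (seqs_step k.+1%:R E); field_at k.
Qed.

Lemma seqs_3k k : seqs a (3 * k) = state_3k k.
Proof.
elim: k => [|k IH]; last exact/seqs_3kS/seqs_3k2/seqs_3k1.
by rewrite /state_3k /Pi1 /Pi2 !big_geq //=; congr (_, _, _, _); field.
Qed.

End Recurrence.

Theorem theorem23 (R : realType) (a : R[i])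
  (* all denominators in the recurrence (step k >= 1) are nonzero *)
  (hrec : forall k : nat, (0 < k)%N ->
     [/\ vseq a k != 0, fseq a k.-1 != 0, gseq a k.-1 != 0 &
         k%:R - a * useq a k / fseq a k.-1 - a * vseq a k / gseq a k.-1 != 0])
  (* all denominators in the closed formulas are nonzero *)
  (hden : forall n : nat,
     [/\ n%:R + a != 0, n%:R + 2 * a != 0, n%:R - a != 0 & n%:R - 2 * a != 0]) :
  (forall k : nat,
     [/\ useq a (3 * k) = (2 * k%:R) / (k%:R + 2 * a) * Pi1 a k,
         useq a (3 * k + 1) = (2 * k%:R + 2 * a) / (k%:R + 2 * a) * Pi1 a k,
         useq a (3 * k + 2) = 2 * Pi1 a k,
         fseq a (3 * k) = (2 * a) / (k%:R + 2 * a) * Pi1 a k &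
         fseq a (3 * k + 1) = (2 * a) / (k%:R + 2 * a) * Pi1 a k] /\
     [/\ vseq a (3 * k) = k%:R / (k%:R + a) * Pi2 a k,
         vseq a (3 * k + 1) = Pi2 a k &
         gseq a (3 * k) = a / (k%:R + a) * Pi2 a k]) /\
  (forall k : nat, (0 < k)%N ->
     [/\ fseq a (3 * k - 1) = (2 * a) / (k%:R + 2 * a) * Pi1 a k,
         vseq a (3 * k - 1) = (k%:R - a) / (k%:R + a) * Pi2 a k,
         gseq a (3 * k - 2) = a / (k%:R + a) * Pi2 a k &
         gseq a (3 * k - 1) = a / (k%:R + a) * Pi2 a k]).
Proof.
have a_neq0 : a != 0.
  have [_ _ + _] := hrec 2%N isT.
  by apply: contraNneq => ->; rewrite /gseq /= !mul0r.
have s0 := seqs_3k _ _ a_neq0 hden.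
have s1 k := seqs_3k1 _ _ a_neq0 hden k (s0 k).
have s2 k := seqs_3k2 _ _ a_neq0 hden k (s1 k).
rewrite /useq /vseq /fseq /gseq; split=> [k | [//|k] _].
  by rewrite addn1 addn2 s0 s1 s2 /state_3k /state_3k1 /state_3k2.
have -> : (3 * k.+1 - 1 = (3 * k).+2)%N by rewrite mulnSr addn3 subn1.
have -> : (3 * k.+1 - 2 = (3 * k).+1)%N by rewrite mulnSr addn3 subn2.
by rewrite s1 s2 /state_3k1 /state_3k2.
Qed.
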